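(* Let $|z|<1$. For $l=1,2,3,4$, \[ |V_l(z)|\le \sum_{j=1}^{l} C_{V,l,j}\frac{|\log(1-|z|)|^j}{j!}, \] with $C_{V,1,1}=2$; $C_{V,2,1} = |\lambda/2-2|$, $C_{V,2,2}=4$; $C_{V,3,1} = |\lambda^2/16-\lambda+2|$, $C_{V,3,2} = |3\lambda-12|+|\lambda-4|$, $C_{V,3,3}=8$; $C_{V,4,1} = |\lambda^3/192-\lambda^2/8-\lambda/2-2|+|2\lambda\zeta(3)|$, $C_{V,4,2} = |\lambda^2/8-2\lambda+4|+|\lambda^2/4-4\lambda+12|+|5\lambda^2/8-8\lambda+28|$, $C_{V,4,3} = |2\lambda-8|+|6\lambda-24|+|14\lambda-56|$, $C_{V,4,4}=16$. Moreover, if $|z|\le a<1$ (with $a>0$), then $|V_l(z)|\le D_{l,a}|z|$, where \[ D_{l,a} = \sum_{j=1}^{l} C_{V,l,j}\frac{|\log(1-a)|^j}{a\cdot j!}. \]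
   Context: Let $\lambda = j_{0,1}^2$ ($j_{0,1}$ the first positive zero of $J_0$) and $\zeta$ the Riemann zeta function. For positive integers $m_1,\dots,m_k$ and $|z|<1$, $\mathrm{Li}_{m_1,\dots,m_k}(z) = \sum_{0<n_1<\dots<n_k}\frac{z^{n_k}}{n_1^{m_1}\cdots n_k^{m_k}}$. Define $V_1 = 2\mathrm{Li}_1$, $V_2 = (\frac{\lambda}{2}-2)\mathrm{Li}_2+4\mathrm{Li}_{1,1}$, $V_3 = (\frac{\lambda^2}{16}-\lambda+2)\mathrm{Li}_3+(3\lambda-12)\mathrm{Li}_{1,2}+(\lambda-4)\mathrm{Li}_{2,1}+8\mathrm{Li}_{1,1,1}$, $V_4 = (\frac{\lambda^3}{192}-\frac{\lambda^2}{8}-\frac{\lambda}{2}-2)\mathrm{Li}_4+(\frac{\lambda^2}{8}-2\lambda+4)\mathrm{Li}_{3,1}+(\frac{\lambda^2}{4}-4\lambda+12)\mathrm{Li}_{2,2}+(\frac{5\lambda^2}{8}-8\lambda+28)\mathrm{Li}_{1,3}+(2\lambda-8)\mathrm{Li}_{2,1,1}+(6\lambda-24)\mathrm{Li}_{1,2,1}+(14\lambda-56)\mathrm{Li}_{1,1,2}+16\mathrm{Li}_{1,1,1,1}+2\lambda\zeta(3)\mathrm{Li}_1$. *)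

From Stdlib Require Import Reals List Arith.
From Coquelicot Require Import Coquelicot.
Import ListNotations.
Open Scope R_scope.

Fixpoint sum_lt (f : nat -> R) (N : nat) : R :=
  match N with
  | O => 0
  | S M => sum_lt f M + f M
  end.

(* Coefficient of z^N in Li_{m_1,...,m_k}(z), with the index list given in
   REVERSED order [m_k; m_{k-1}; ...; m_1]:
     coef_rev [m_k;...;m_1] N = sum_{0<n_1<...<n_{k-1}<n_k = N} 1/(n_1^{m_1}...n_k^{m_k}). *)
Fixpoint coef_rev (ms : list nat) (N : nat) : R :=
  match ms with
  | [] => match N with O => 1 | S _ => 0 end
  | m :: rest =>
      match N with
      | O => 0
      | S _ => / (INR N ^ m) * sum_lt (coef_rev rest) N
      end
  end.

(* Sum of a complex series, computed componentwise (agrees with the limit of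
   partial sums whenever the complex series converges). *)
Definition CSeries (a : nat -> C) : C :=
  (Series (fun n => Re (a n)), Series (fun n => Im (a n))).

(* Multiple polylogarithm Li_{m_1,...,m_k}(z) = sum_{0<n_1<...<n_k} z^{n_k}/(n_1^{m_1}...n_k^{m_k}),
   list given in the paper's order [m_1; ...; m_k]. *)
Definition Li (ms : list nat) (z : C) : C :=
  CSeries (fun N => Cmult (RtoC (coef_rev (rev ms) N)) (Cpow z N)).

Definition J0 (x : R) : R :=
  Series (fun k => (-1) ^ k * (x / 2) ^ (2 * k) / (INR (Factorial.fact k)) ^ 2).

Definition zeta3 : R := Series (fun n => / (INR (S n)) ^ 3).

Definition sc (r : R) (w : C) : C := Cmult (RtoC r) w.

(* V_l(z), depending on the parameter lam (= j_{0,1}^2) *)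
Definition V (lam : R) (l : nat) (z : C) : C :=
  match l with
  | 1%nat => sc 2 (Li [1%nat] z)
  | 2%nat => Cplus (sc (lam/2 - 2) (Li [2%nat] z)) (sc 4 (Li [1;1]%nat z))
  | 3%nat =>
      Cplus (sc (lam^2/16 - lam + 2) (Li [3%nat] z))
     (Cplus (sc (3*lam - 12) (Li [1;2]%nat z))
     (Cplus (sc (lam - 4) (Li [2;1]%nat z))
            (sc 8 (Li [1;1;1]%nat z))))
  | 4%nat =>
      Cplus (sc (lam^3/192 - lam^2/8 - lam/2 - 2) (Li [4%nat] z))
     (Cplus (sc (lam^2/8 - 2*lam + 4) (Li [3;1]%nat z))
     (Cplus (sc (lam^2/4 - 4*lam + 12) (Li [2;2]%nat z))
     (Cplus (sc (5*lam^2/8 - 8*lam + 28) (Li [1;3]%nat z))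
     (Cplus (sc (2*lam - 8) (Li [2;1;1]%nat z))
     (Cplus (sc (6*lam - 24) (Li [1;2;1]%nat z))
     (Cplus (sc (14*lam - 56) (Li [1;1;2]%nat z))
     (Cplus (sc 16 (Li [1;1;1;1]%nat z))
            (sc (2*lam*zeta3) (Li [1%nat] z)))))))))
  | _ => RtoC 0
  end.

Definition CV (lam : R) (l j : nat) : R :=
  match l, j with
  | 1, 1 => 2
  | 2, 1 => Rabs (lam/2 - 2)
  | 2, 2 => 4
  | 3, 1 => Rabs (lam^2/16 - lam + 2)
  | 3, 2 => Rabs (3*lam - 12) + Rabs (lam - 4)
  | 3, 3 => 8
  | 4, 1 => Rabs (lam^3/192 - lam^2/8 - lam/2 - 2) + Rabs (2*lam*zeta3)
  | 4, 2 => Rabs (lam^2/8 - 2*lam + 4) + Rabs (lam^2/4 - 4*lam + 12)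
            + Rabs (5*lam^2/8 - 8*lam + 28)
  | 4, 3 => Rabs (2*lam - 8) + Rabs (6*lam - 24) + Rabs (14*lam - 56)
  | 4, 4 => 16
  | _, _ => 0
  end.

Definition sum1 (f : nat -> R) (l : nat) : R := sum_lt (fun i => f (S i)) l.

Definition DV (lam : R) (l : nat) (a : R) : R :=
  sum1 (fun j => CV lam l j * Rabs (ln (1 - a)) ^ j / (a * INR (Factorial.fact j))) l.

(* Write Li_{1^k} for Li_{1,...,1} with k ones, and c_k(n) for its coefficients. When every
   index m_i is at least 1, the coefficients of Li_{m_1,...,m_k} lie between 0 and c_k, so
   |Li_{m_1,...,m_k}(z)| <= Li_{1^k}(|z|). On [0,1) the series Li_{1^k}(x) equals
   (-log(1-x))^k / k!: both sides vanish at 0 and, since n c_{k+1}(n) = sum_{i<n} c_k(i), both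
   have derivative Li_{1^(k-1)}(x) / (1-x). Summing over the terms of V_l gives the first bound.
   For the second, a power series with nonnegative coefficients and no constant term satisfies
   f(x) <= (x/a) f(a) for 0 <= x <= a. *)

From Stdlib Require Import Reals List Lra Lia.
From Coquelicot Require Import Coquelicot.
Open Scope R_scope.

Lemma sum_lt_le (f g : nat -> R) (n : nat) :
  (forall i, (i < n)%nat -> f i <= g i) -> sum_lt f n <= sum_lt g n.
Proof.
  induction n as [|n IH]; simpl; intros Hfg; [lra|].
  assert (f n <= g n) by (apply Hfg; lia).
  assert (sum_lt f n <= sum_lt g n) by (apply IH; intros; apply Hfg; lia).
  lra.
Qed.

Lemma sum_lt_ext (f g : nat -> R) (n : nat) :
  (forall i, (i < n)%nat -> f i = g i) -> sum_lt f n = sum_lt g n.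
Proof.
  intros Hfg; apply Rle_antisym; apply sum_lt_le; intros i Hi; rewrite Hfg by exact Hi; lra.
Qed.

Lemma sum_lt_nonneg (f : nat -> R) (n : nat) : (forall i, 0 <= f i) -> 0 <= sum_lt f n.
Proof. intros Hf; induction n as [|n IH]; simpl; [lra|]. specialize (Hf n); lra. Qed.

Lemma sum_lt_le_const (f : nat -> R) (c : R) (n : nat) :
  (forall i, f i <= c) -> sum_lt f n <= INR n * c.
Proof.
  intros Hf; induction n as [|n IH]; simpl sum_lt; [simpl; lra|].
  rewrite S_INR. specialize (Hf n); lra.
Qed.

Lemma sum_lt_scal_l (f : nat -> R) (c : R) (n : nat) :
  sum_lt (fun i => c * f i) n = c * sum_lt f n.
Proof. induction n as [|n IH]; simpl; [ring|]. rewrite IH; ring. Qed.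

Lemma Series_nonneg (a : nat -> R) : (forall n, 0 <= a n) -> ex_series a -> 0 <= Series a.
Proof.
  intros Ha Hex.
  replace 0 with (Series (fun n => 0 * a n)) by (rewrite Series_scal_l; ring).
  apply Series_le; [intros n; specialize (Ha n); lra | exact Hex].
Qed.

Lemma CV_radius_ge_1 (c : nat -> R) : (forall n, Rabs (c n) <= 1) -> Rbar_le 1 (CV_radius c).
Proof.
  intros Hc. apply (proj1 (CV_radius_bounded c)). exists 1; intros n.
  rewrite pow1, Rmult_1_r. apply Hc.
Qed.

Lemma CV_radius_gt_Rabs (c : nat -> R) (x : R) :
  (forall n, Rabs (c n) <= 1) -> Rabs x < 1 -> Rbar_lt (Rabs x) (CV_radius c).
Proof. intros Hc Hx. apply (Rbar_lt_le_trans _ 1); [exact Hx | apply CV_radius_ge_1, Hc]. Qed.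

Lemma ex_pseries_bounded (c : nat -> R) (x : R) :
  (forall n, Rabs (c n) <= 1) -> Rabs x < 1 -> ex_pseries c x.
Proof. intros Hc Hx. apply CV_radius_inside, CV_radius_gt_Rabs; assumption. Qed.

Lemma PSeries_partial_sums (c : nat -> R) (x : R) :
  ex_pseries (fun n => sum_lt c (S n)) x ->
  PSeries c x = (1 - x) * PSeries (fun n => sum_lt c (S n)) x.
Proof.
  set (s := fun n => sum_lt c (S n)). intros Hs.
  assert (Hc : forall n, PS_minus s (PS_incr_1 s) n = c n).
  { intros [|n]; unfold PS_minus, PS_incr_1, plus, opp, zero, s; simpl; lra. }
  rewrite <- (PSeries_ext _ _ x Hc), PSeries_minus, PSeries_incr_1.
  - ring.
  - exact Hs.
  - apply ex_pseries_incr_1, Hs.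
Qed.

Lemma PSeries_le_scaled (c : nat -> R) (x a : R) :
  c 0%nat = 0 -> (forall n, 0 <= c n) -> ex_pseries c a -> 0 <= x <= a -> 0 < a ->
  PSeries c x <= x / a * PSeries c a.
Proof.
  intros Hc0 Hc Hca Hx Ha. apply ex_pseries_R in Hca.
  unfold PSeries. rewrite <- Series_scal_l. apply Series_le.
  - intros [|n]; [rewrite Hc0; simpl; lra|].
    assert (x ^ n <= a ^ n) by (apply pow_incr; lra).
    assert (0 <= x ^ n) by (apply pow_le; lra).
    assert (0 <= c (S n)) by apply Hc.
    replace (x / a * (c (S n) * a ^ S n)) with (c (S n) * (x * a ^ n)) by (simpl; field; lra).
    simpl. split; [apply Rmult_le_pos; nra|].
    apply Rmult_le_compat_l; nra.
  - exact (ex_series_scal_l (x / a) _ Hca).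
Qed.

Lemma Rabs_Im_le_Cmod (w : C) : Rabs (Im w) <= Cmod w.
Proof.
  destruct w as [p q]; unfold Cmod; simpl.
  rewrite <- sqrt_Rsqr_abs. apply sqrt_le_1_alt. unfold Rsqr; nra.
Qed.

(* With w the sum, |w|^2 = sum_n Re(conj w * u n) <= |w| * sum_n v n. *)
Lemma CSeries_Cmod_le (u : nat -> C) (v : nat -> R) :
  (forall n, Cmod (u n) <= v n) -> ex_series v -> Cmod (CSeries u) <= Series v.
Proof.
  intros Huv Hv. set (w := CSeries u).
  assert (HRe : ex_series (fun n => Re (u n))).
  { apply (@ex_series_le R_AbsRing R_CompleteNormedModule _ v); [|exact Hv]. intros n.
    eapply Rle_trans; [apply re_le_Cmod | apply Huv]. }
  assert (HIm : ex_series (fun n => Im (u n))).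
  { apply (@ex_series_le R_AbsRing R_CompleteNormedModule _ v); [|exact Hv]. intros n.
    eapply Rle_trans; [apply Rabs_Im_le_Cmod | apply Huv]. }
  set (t := fun n => Re w * Re (u n) + Im w * Im (u n)).
  assert (Ht : forall n, Rabs (t n) <= Cmod w * v n).
  { intros n. replace (t n) with (Re (Cconj w * u n))
      by (unfold t; destruct w, (u n); simpl; ring).
    eapply Rle_trans; [apply re_le_Cmod|].
    rewrite Cmod_mult, Cmod_conj. apply Rmult_le_compat_l; [apply Cmod_ge_0 | apply Huv]. }
  assert (Hwv : ex_series (fun n => Cmod w * v n)) by exact (ex_series_scal_l (Cmod w) v Hv).
  assert (Hw2 : Cmod w ^ 2 = Series t).
  { unfold t. rewrite Cmod2_alt, Series_plus, !Series_scal_l.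
    - unfold w, CSeries; simpl; ring.
    - exact (ex_series_scal_l (Re w) _ HRe).
    - exact (ex_series_scal_l (Im w) _ HIm). }
  assert (Hv0 : 0 <= Series v).
  { apply Series_nonneg; [|exact Hv]. intros n.
    eapply Rle_trans; [apply Cmod_ge_0 | apply Huv]. }
  assert (Hwv' : ex_series (fun n => Rabs (t n))).
  { apply (@ex_series_le R_AbsRing R_CompleteNormedModule _ (fun n => Cmod w * v n));
      [|exact Hwv]. intros n.
    apply (Rle_trans _ (Rabs (t n))); [apply Req_le, Rabs_Rabsolu | apply Ht]. }
  assert (Cmod w ^ 2 <= Cmod w * Series v).
  { rewrite Hw2, <- Series_scal_l.
    eapply Rle_trans; [apply Rle_abs|].
    eapply Rle_trans; [apply Series_Rabs, Hwv'|].
    apply Series_le; [|exact Hwv]. intros n; split; [apply Rabs_pos | apply Ht]. }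
  pose proof (Cmod_ge_0 w). nra.
Qed.

Definition coef_ones (k : nat) : nat -> R := coef_rev (repeat 1%nat k).

Lemma coef_ones_bounds (k n : nat) : 0 <= coef_ones k n <= 1.
Proof.
  revert n; induction k as [|k IH]; intros [|n];
    unfold coef_ones; cbn [coef_rev repeat]; try lra.
  fold (coef_ones k).
  assert (HS : 0 < INR (S n)) by (apply lt_0_INR; lia).
  assert (0 <= sum_lt (coef_ones k) (S n)) by (apply sum_lt_nonneg; apply IH).
  assert (sum_lt (coef_ones k) (S n) <= INR (S n)).
  { rewrite <- (Rmult_1_r (INR (S n))). apply sum_lt_le_const; apply IH. }
  rewrite pow_1. split.
  - apply Rmult_le_pos; [apply Rlt_le, Rinv_0_lt_compat|]; lra.
  - apply (Rmult_le_reg_l (INR (S n))); [lra|].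
    rewrite <- Rmult_assoc, Rinv_r; lra.
Qed.

Lemma Rabs_coef_ones_le_1 (k n : nat) : Rabs (coef_ones k n) <= 1.
Proof. destruct (coef_ones_bounds k n). rewrite Rabs_pos_eq; lra. Qed.

Lemma coef_rev_bounds (ms : list nat) (n : nat) :
  List.Forall (fun m => (1 <= m)%nat) ms -> 0 <= coef_rev ms n <= coef_ones (length ms) n.
Proof.
  intros Hms; revert n; induction Hms as [|m rest Hm _ IH]; intros [|n];
    unfold coef_ones; cbn [coef_rev repeat length]; try lra.
  fold (coef_ones (length rest)).
  assert (HS : 1 <= INR (S n)) by (rewrite S_INR; pose proof (pos_INR n); lra).
  assert (INR (S n) <= INR (S n) ^ m).
  { destruct m as [|m]; [lia|]. cbn [pow]. rewrite <- (Rmult_1_r (INR (S n))) at 1.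
    apply Rmult_le_compat_l; [lra | apply pow_R1_Rle; lra]. }
  assert (0 <= sum_lt (coef_rev rest) (S n)) by (apply sum_lt_nonneg; apply IH).
  assert (sum_lt (coef_rev rest) (S n) <= sum_lt (coef_ones (length rest)) (S n))
    by (apply sum_lt_le; intros i _; apply IH).
  assert (0 < INR (S n) ^ m) by (apply pow_lt; lra).
  split.
  - apply Rmult_le_pos; [apply Rlt_le, Rinv_0_lt_compat|]; lra.
  - apply Rmult_le_compat; try lra.
    + apply Rlt_le, Rinv_0_lt_compat; lra.
    + apply Rinv_le_contravar; lra.
Qed.

Lemma Cmod_Li_le (ms : list nat) (z : C) :
  List.Forall (fun m => (1 <= m)%nat) ms -> Cmod z < 1 ->
  Cmod (Li ms z) <= PSeries (coef_ones (length ms)) (Cmod z).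
Proof.
  intros Hms Hz. apply CSeries_Cmod_le.
  - intros n. rewrite Cmod_mult, Cmod_R, Cmod_pow.
    destruct (coef_rev_bounds (rev ms) n (Forall_rev Hms)) as [H0 H1].
    rewrite length_rev in H1. rewrite Rabs_pos_eq by lra.
    apply Rmult_le_compat_r; [apply pow_le, Cmod_ge_0 | exact H1].
  - apply ex_pseries_R, ex_pseries_bounded; [apply Rabs_coef_ones_le_1|].
    rewrite Rabs_pos_eq by apply Cmod_ge_0. exact Hz.
Qed.

Definition neglog_pow (k : nat) (x : R) : R := (- ln (1 - x)) ^ k / INR (Factorial.fact k).

Lemma PS_derive_coef_ones (k n : nat) :
  PS_derive (coef_ones (S k)) n = sum_lt (coef_ones k) (S n).
Proof.
  unfold PS_derive. change (coef_ones (S k) (S n))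
    with (/ INR (S n) ^ 1 * sum_lt (coef_ones k) (S n)).
  rewrite pow_1, <- Rmult_assoc, Rinv_r, Rmult_1_l by (apply not_0_INR; lia).
  reflexivity.
Qed.

Lemma is_derive_PSeries_coef_ones (k : nat) (x : R) : Rabs x < 1 ->
  is_derive (PSeries (coef_ones (S k))) x (PSeries (coef_ones k) x / (1 - x)).
Proof.
  intros Hx.
  assert (Hr := CV_radius_gt_Rabs _ x (Rabs_coef_ones_le_1 (S k)) Hx).
  assert (Hs : ex_pseries (fun n => sum_lt (coef_ones k) (S n)) x).
  { apply (ex_pseries_ext (PS_derive (coef_ones (S k)))).
    - apply PS_derive_coef_ones.
    - apply ex_pseries_derive, Hr. }
  replace (PSeries (coef_ones k) x / (1 - x))
    with (PSeries (PS_derive (coef_ones (S k))) x).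
  - apply is_derive_PSeries, Hr.
  - assert (x < 1) by (pose proof (Rle_abs x); lra).
    rewrite (PSeries_partial_sums _ _ Hs), (PSeries_ext _ _ x (PS_derive_coef_ones k)).
    field; lra.
Qed.

Lemma is_derive_neglog_pow (k : nat) (x : R) : x < 1 ->
  is_derive (neglog_pow (S k)) x (neglog_pow k x / (1 - x)).
Proof.
  intros Hx. unfold neglog_pow. auto_derive; [lra|].
  change (match k with 0%nat => 1 | S _ => INR k + 1 end) with (INR (S k)).
  replace (Factorial.fact k + k * Factorial.fact k)%nat with (S k * Factorial.fact k)%nat by ring.
  rewrite mult_INR, S_INR.
  assert (INR (Factorial.fact k) <> 0) by apply INR_fact_neq_0.
  assert (0 <= INR k) by apply pos_INR.
  unfold Rminus. field; repeat split; lra.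
Qed.

Lemma eq_of_is_derive_eq (f g df : R -> R) (a b : R) :
  (forall t, a <= t < b -> is_derive f t (df t)) ->
  (forall t, a <= t < b -> is_derive g t (df t)) ->
  f a = g a -> forall x, a <= x < b -> f x = g x.
Proof.
  intros Hf Hg Ha x Hx.
  set (h := fun t => f t - g t).
  assert (Hh : forall t, a <= t < b -> is_derive h t 0).
  { intros t Ht. replace 0 with (df t - df t) by ring.
    apply (is_derive_minus f g); [apply Hf | apply Hg]; exact Ht. }
  destruct (MVT_gen h a x (fun _ => 0)) as [c [_ Hc]].
  - intros t Ht. rewrite Rmin_left, Rmax_right in Ht by lra. apply Hh; lra.
  - intros t Ht. rewrite Rmin_left, Rmax_right in Ht by lra.
    apply continuity_pt_filterlim, (@ex_derive_continuous R_AbsRing R_NormedModule).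
    eexists. apply Hh; lra.
  - unfold h in Hc. lra.
Qed.

Lemma PSeries_coef_ones (k : nat) (x : R) : 0 <= x < 1 ->
  PSeries (coef_ones k) x = neglog_pow k x.
Proof.
  revert x; induction k as [|k IH]; intros x Hx.
  - rewrite PSeries_decr_1.
    + rewrite (PSeries_ext _ (fun _ => 0)), PSeries_const_0 by reflexivity.
      change (coef_ones 0 0) with 1. unfold neglog_pow; simpl; field.
    + apply ex_pseries_bounded; [apply Rabs_coef_ones_le_1 | rewrite Rabs_pos_eq; lra].
  - apply (eq_of_is_derive_eq _ _ (fun t => neglog_pow k t / (1 - t)) 0 1); [| | |exact Hx].
    + intros t Ht. rewrite <- (IH t Ht).
      apply is_derive_PSeries_coef_ones. rewrite Rabs_pos_eq; lra.
    + intros t Ht. apply is_derive_neglog_pow; lra.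
    + rewrite PSeries_0. unfold neglog_pow. rewrite Rminus_0_r, ln_1.
      change (coef_ones (S k) 0) with 0. rewrite Ropp_0, pow_i by lia. unfold Rdiv; ring.
Qed.

Lemma Cmod_sc_Li_le (r : R) (ms : list nat) (z : C) :
  List.Forall (fun m => (1 <= m)%nat) ms -> Cmod z < 1 ->
  Cmod (sc r (Li ms z)) <= Rabs r * PSeries (coef_ones (length ms)) (Cmod z).
Proof.
  intros Hms Hz. unfold sc. rewrite Cmod_mult, Cmod_R.
  apply Rmult_le_compat_l; [apply Rabs_pos | apply Cmod_Li_le; assumption].
Qed.

Lemma Cmod_Cplus_le (u v : C) (A B : R) : Cmod u <= A -> Cmod v <= B -> Cmod (u + v) <= A + B.
Proof. intros Hu Hv. eapply Rle_trans; [apply Cmod_triangle | lra]. Qed.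

Lemma Cmod_V_le (lam : R) (l : nat) (z : C) : (1 <= l <= 4)%nat -> Cmod z < 1 ->
  Cmod (V lam l z) <= sum1 (fun j => CV lam l j * PSeries (coef_ones j) (Cmod z)) l.
Proof.
  intros Hl Hz.
  destruct l as [|[|[|[|[|l]]]]]; try lia; unfold V, sum1; cbn [sum_lt CV];
    (eapply Rle_trans;
     [repeat apply Cmod_Cplus_le; (apply Cmod_sc_Li_le; [repeat constructor | exact Hz]) |]);
    cbn [length];
    rewrite ?(Rabs_pos_eq 2), ?(Rabs_pos_eq 4), ?(Rabs_pos_eq 8), ?(Rabs_pos_eq 16) by lra;
    apply Req_le; ring.
Qed.

Lemma CV_nonneg (lam : R) (l j : nat) : 0 <= CV lam l j.
Proof.
  destruct l as [|[|[|[|[|l]]]]], j as [|[|[|[|[|j]]]]]; unfold CV; try lra;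
    repeat apply Rplus_le_le_0_compat; apply Rabs_pos.
Qed.

Lemma Rabs_ln_1_minus (x : R) : 0 <= x < 1 -> Rabs (ln (1 - x)) = - ln (1 - x).
Proof. intros Hx. apply Rabs_left1. rewrite <- ln_1. apply ln_le; lra. Qed.

Theorem lemmaA2 (j01 : R)
  (hj_pos : 0 < j01) (hj_zero : J0 j01 = 0)
  (hj_first : forall x, 0 < x < j01 -> J0 x <> 0)
  (l : nat) (hl : (1 <= l <= 4)%nat) (z : C) (hz : Cmod z < 1) :
  Cmod (V (j01 ^ 2) l z)
    <= sum1 (fun j => CV (j01 ^ 2) l j * Rabs (ln (1 - Cmod z)) ^ j / INR (Factorial.fact j)) l
  /\ (forall a : R, 0 < a < 1 -> Cmod z <= a ->
        Cmod (V (j01 ^ 2) l z) <= DV (j01 ^ 2) l a * Cmod z).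
Proof.
  set (lam := j01 ^ 2). set (x := Cmod z).
  assert (Hx : 0 <= x < 1) by (split; [apply Cmod_ge_0 | exact hz]).
  assert (HV := Cmod_V_le lam l z hl hz). fold x in HV.
  split.
  - eapply Rle_trans; [exact HV|]. apply Req_le, sum_lt_ext. intros i _.
    rewrite PSeries_coef_ones, Rabs_ln_1_minus by exact Hx.
    unfold neglog_pow, Rdiv. ring.
  - intros a Ha Hxa. eapply Rle_trans; [exact HV|].
    unfold DV, sum1. rewrite Rmult_comm, <- sum_lt_scal_l.
    apply sum_lt_le. intros i _.
    assert (Hscaled : PSeries (coef_ones (S i)) x <= x / a * PSeries (coef_ones (S i)) a).
    { apply PSeries_le_scaled; try lra.
      - reflexivity.
      - apply coef_ones_bounds.
      - apply ex_pseries_bounded; [apply Rabs_coef_ones_le_1 | rewrite Rabs_pos_eq; lra]. }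
    eapply Rle_trans; [apply Rmult_le_compat_l; [apply CV_nonneg | exact Hscaled]|].
    rewrite PSeries_coef_ones, Rabs_ln_1_minus by lra.
    apply Req_le. unfold neglog_pow. field. split; [apply INR_fact_neq_0 | lra].
Qed.
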